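(* In the setting below, $V=\ker\bar{\phi}$ as subspaces of $D(\mathcal{A})/D(\mathcal{A}')$.
   Context: A complex subspace arrangement in $\mathbb{C}^l$ is a finite set of complex linear subspaces of $\mathbb{C}^l$ with no two distinct members $x\subset y$. For a finite set $\mathcal{C}$ of linear subspaces of a complex vector space $W$ with a linear order, $D(\mathcal{C})$ is the cochain complex over $\mathbb{Q}$ with basis all subsets $\sigma\subseteq\mathcal{C}$, where with $\vee\sigma=\bigcap_{x\in\sigma}x$ ($\vee\emptyset=W$), $\deg\sigma=2\operatorname{codim}_W(\vee\sigma)-|\sigma|$ and for $\sigma=\{x_{i_1},\dots,x_{i_r}\}$ in increasing order, $d\sigma=\sum_{j:\vee(\sigma\setminus\{x_{i_j}\})=\vee\sigma}(-1)^j(\sigma\setminus\{x_{i_j}\})$. Setting: $\mathcal{A}=\{x_0,\dots,x_n\}$ is a complex subspace arrangement in $\mathbb{C}^l$, $\mathcal{A}'=\mathcal{A}\setminus\{x_0\}$; on $\mathcal{A}'$, $y\sim z$ iff $x_0\cap y=x_0\cap z$, with classes $\mathcal{A}_1,\dots,\mathcal{A}_r$; the linear order is $x_0<x_1<\dots<x_n$ with elements of $\mathcal{A}_i$ preceding elements of $\mathcal{A}_j$ whenever $i<j$. $D(\mathcal{A}')$ is the subcomplex of $D(\mathcal{A})$ spanned by subsets not containing $x_0$. $\widetilde{\mathcal{A}''}=\{x_0\cap y\mid y\in\mathcal{A}'\}$, ordered by the order of the corresponding classes, and $D(\widetilde{\mathcal{A}''})$ is formed with ambient space $x_0$. $E=\{(y,z)\in\mathcal{A}'\times\mathcal{A}'\mid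 y\sim z,\ y\ne z\}$. The linear map $\phi\colon D(\mathcal{A})\to D(\widetilde{\mathcal{A}''})$ is: $\phi(\sigma)=0$ if $x_0\notin\sigma$ or if $x_0\in\sigma$ and $\{y,z\}\subseteq\sigma$ for some $(y,z)\in E$; otherwise, for $\sigma=\{x_0,x_{i_1},\dots,x_{i_r}\}$, $\phi(\sigma)=(-1)^r\{x_0\cap x_{i_1},\dots,x_0\cap x_{i_r}\}$. Since $\phi$ vanishes on $D(\mathcal{A}')$ it induces $\bar\phi\colon D(\mathcal{A})/D(\mathcal{A}')\to D(\widetilde{\mathcal{A}''})$. For $(u,v)\in E$, $I_{u,v}$ is the subspace of $D(\mathcal{A})/D(\mathcal{A}')$ spanned by the classes of all $\{x_0,u\}\cup Y-\{x_0,v\}\cup Y$ and all $\{x_0,u,v\}\cup Y$, for $Y\subseteq\mathcal{A}\setminus\{x_0,u,v\}$. Finally $V=\sum_{(u,v)\in E}I_{u,v}$ (with $V=0$ if $E=\emptyset$). *)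

From HB Require Import structures.
From mathcomp Require Import all_boot all_order all_algebra.
From mathcomp Require Import complex reals.
Set Implicit Arguments. Unset Strict Implicit. Unset Printing Implicit Defensive.
Import Order.TTheory GRing.Theory Num.Theory.
Local Open Scope ring_scope.

Definition freeQ (T : finType) := 'rV[rat]_#|{: T}|.
Definition bvec (T : finType) (t : T) : freeQ T := delta_mx 0 (enum_rank t).

Section Arrangement.
Variables (R : realType) (l n : nat).
Notation C := (complex R).
(* The subspaces x_0, ..., x_n of C^l, x_i = row space of A i. *)
Variable A : 'I_n.+1 -> 'M[C]_l.

Definition x0 : 'I_n.+1 := ord0.

Definition is_subspace_arrangement :=
  forall i j : 'I_n.+1, i != j -> ~~ (A i <= A j)%MS.

Definition simA (y z : 'I_n.+1) : bool :=
  (A x0 :&: A y == A x0 :&: A z)%MS.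

(* The linear order x_0 < x_1 < ... < x_n has elements of A_i preceding those
   of A_j for i < j, for a suitable numbering of the classes: equivalently,
   every ~-class of A' is a set of consecutive indices. *)
Definition classes_consecutive :=
  forall i j k : 'I_n.+1, (x0 < i)%N -> (i < j)%N -> (j < k)%N -> simA i k -> simA i j.

Definition inE (y z : 'I_n.+1) : bool :=
  [&& y != x0, z != x0, simA y z & y != z].

(* ~-class of y in A' ; the element x0 ∩ y of Ã'' is identified with the
   class of y (x0 ∩ y = x0 ∩ z iff y ~ z). *)
Definition clsA (y : 'I_n.+1) : {set 'I_n.+1} :=
  [set z | (z != x0) && simA y z].

Definition Atil : {set {set 'I_n.+1}} := [set clsA y | y in [set~ x0]].

Definition DA := freeQ {set 'I_n.+1}.

(* Basis of D(A)/D(A'): classes of the subsets containing x0 (the classes of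
   subsets not containing x0 are zero). *)
Local Notation Qidx := {s : {set 'I_n.+1} | x0 \in s}.
Definition DQ := freeQ Qidx.

Definition qcls (sigma : {set 'I_n.+1}) : DQ :=
  if (insub sigma : option Qidx) is Some s
  then bvec s else 0.

Local Notation Tidx := {S : {set {set 'I_n.+1}} | S \subset Atil}.
Definition DT := freeQ Tidx.

Definition tbvec (S : {set {set 'I_n.+1}}) : DT :=
  if (insub S : option Tidx) is Some s
  then bvec s else 0.

Definition phi (sigma : {set 'I_n.+1}) : DT :=
  if (x0 \in sigma) &&
     ~~ [exists y, exists z, [&& inE y z, y \in sigma & z \in sigma]]
  then (-1) ^+ (#|sigma| - 1) *: tbvec [set clsA y | y in sigma :\ x0]
  else 0.

Definition phibar_mx : 'M[rat]_(#|{: Qidx}|, #|{: Tidx}|) :=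
  \matrix_(i < #|{: Qidx}|) phi (val (enum_val i)).

Definition I_uv (u v : 'I_n.+1) : 'M[rat]_#|{: Qidx}| :=
  (\sum_(Y : {set 'I_n.+1} | Y \subset ~: [set x0; u; v])
     (<<qcls (x0 |: (u |: Y)) - qcls (x0 |: (v |: Y))>>
      + <<qcls (x0 |: (u |: (v |: Y)))>>))%MS.

Definition Vsp : 'M[rat]_#|{: Qidx}| :=
  (\sum_(p : 'I_n.+1 * 'I_n.+1 | inE p.1 p.2) I_uv p.1 p.2)%MS.

End Arrangement.

(* Every generator of I_{u,v} is killed by phibar: swapping u for v in a simplex
   changes neither phi's sign nor its image, and a simplex containing an E-pair
   has phi = 0.  Conversely, choosing a representative of each class gives a map
   N : D(A'') -> D(A)/D(A') with sigma - phibar(sigma) N in V for every basis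
   element sigma: if sigma contains an E-pair it lies in V, and otherwise sigma
   and the simplex N picks for its image have the same classes, so they are joined
   by a chain of single swaps u -> v, each a generator of V.  Hence 1 - phibar N
   maps into V, and every w in ker phibar equals w (1 - phibar N). *)

From Pilot Require Import Defs.
From HB Require Import structures.
From mathcomp Require Import all_boot all_order all_algebra.
From mathcomp Require Import complex reals.
Set Implicit Arguments. Unset Strict Implicit. Unset Printing Implicit Defensive.
Import Order.TTheory GRing.Theory Num.Theory.
Local Open Scope ring_scope.

Lemma subsetC3E (T : finType) (Y : {set T}) (a b c : T) :
  (Y \subset ~: [set a; b; c]) = [&& a \notin Y, b \notin Y & c \notin Y].
Proof.
apply/idP/idP => [/subsetP sub | /and3P[aY bY cY]].
  by apply/and3P; split; apply/negP => /sub; rewrite !inE eqxx ?orbT.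
apply/subsetP => x xY; rewrite !inE !negb_or.
by rewrite -andbA; apply/and3P; split; apply: contraTneq xY => ->.
Qed.

Section Arrangement.
Variables (R : realType) (l n : nat) (A : 'I_n.+1 -> 'M[complex R]_l).
Local Notation x0 := (x0 n).
Local Notation sim := (simA A).
Local Notation cls := (clsA A).
Local Notation Q := {s : {set 'I_n.+1} | x0 \in s}.
Local Notation T := {S : {set {set 'I_n.+1}} | S \subset Atil A}.
Implicit Types (S : {set {set 'I_n.+1}}) (s t Y : {set 'I_n.+1}) (y z u v : 'I_n.+1).

Lemma simA_refl y : sim y y.
Proof. by rewrite /simA submx_refl. Qed.

Lemma simA_sym y z : sim y z -> sim z y.
Proof. by rewrite /simA => /andP[yz zy]; apply/andP. Qed.

Lemma simA_trans y z w : sim y z -> sim z w -> sim y w.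
Proof.
rewrite /simA => /andP[yz zy] /andP[zw wz].
by apply/andP; split; [exact: submx_trans yz zw | exact: submx_trans wz zy].
Qed.

Lemma clsA_sim y z : sim y z -> cls y = cls z.
Proof.
move=> yz; apply/setP=> w; rewrite !inE; congr (_ && _).
by apply/idP/idP; [apply: simA_trans (simA_sym yz) | apply: simA_trans yz].
Qed.

Lemma eq_clsA y z : z != x0 -> (cls y == cls z) = sim y z.
Proof.
move=> z0; apply/eqP/idP => [e|]; last exact: clsA_sim.
have : z \in cls z by rewrite inE z0 simA_refl.
by rewrite -e inE => /andP[].
Qed.

(* [Defs.inE] (membership in E) is shadowed by MathComp's [inE]. *)
Local Notation Epair := (Defs.inE A).

Definition has_Epair s := [exists y, exists z, [&& Epair y z, y \in s & z \in s]].

Definition classes_of s := [set cls y | y in s :\ x0].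

Lemma has_EpairN s : ~~ has_Epair s = (#|classes_of s| == #|s :\ x0|).
Proof.
apply/idP/imset_injP => [noE | inj].
  move=> y z; rewrite !inE => /andP[y0 ys] /andP[z0 zs] /eqP.
  rewrite eq_clsA // => yz; case: (eqVneq y z) => // /negbTE y'z.
  move/negP: noE; case; apply/existsP; exists y; apply/existsP; exists z.
  by rewrite /Defs.inE y0 z0 yz y'z ys zs.
apply/negP => /existsP[y /existsP[z /and3P[/and4P[y0 z0 yz y'z] ys zs]]].
have y_eq_z : y = z by apply: inj; rewrite ?inE ?y0 ?z0 ?ys ?zs //; apply/eqP; rewrite eq_clsA.
by rewrite y_eq_z eqxx in y'z.
Qed.

Lemma classes_of_sub s : classes_of s \subset Atil A.
Proof.
apply/subsetP => c /imsetP[y]; rewrite !inE => /andP[y0 _] ->.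
by apply/imsetP; exists y; rewrite ?inE.
Qed.

Lemma phi_has_Epair s : has_Epair s -> phi A s = 0.
Proof. by move=> sE; rewrite /phi -/(has_Epair s) sE andbF. Qed.

Lemma setU1x0K y Y : y != x0 -> x0 \notin Y -> (x0 |: (y |: Y)) :\ x0 = y |: Y.
Proof. by move=> y0 x0Y; rewrite setU1K // in_setU1 negb_or eq_sym y0. Qed.

Section Swap.
Variables (u v : 'I_n.+1) (Y : {set 'I_n.+1}).
Hypotheses (uv : Epair u v) (hY : Y \subset ~: [set x0; u; v]).

Let u0 : u != x0. Proof. by case/and4P: uv. Qed.
Let v0 : v != x0. Proof. by case/and4P: uv. Qed.
Let x0Y : x0 \notin Y. Proof. by move: hY; rewrite subsetC3E => /and3P[]. Qed.
Let uY : u \notin Y. Proof. by move: hY; rewrite subsetC3E => /and3P[]. Qed.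
Let vY : v \notin Y. Proof. by move: hY; rewrite subsetC3E => /and3P[]. Qed.

Lemma classes_of_swap : classes_of (x0 |: (u |: Y)) = classes_of (x0 |: (v |: Y)).
Proof.
have uv_sim : sim u v by case/and4P: uv.
by rewrite /classes_of !setU1x0K // !imsetU1 (clsA_sim uv_sim).
Qed.

Lemma card_swap : #|x0 |: (u |: Y)| = #|x0 |: (v |: Y)|.
Proof.
by rewrite (cardsD1 x0) [RHS](cardsD1 x0) !setU11 !setU1x0K // !cardsU1 uY vY.
Qed.

Lemma has_Epair_swap : has_Epair (x0 |: (u |: Y)) = has_Epair (x0 |: (v |: Y)).
Proof.
by apply/negb_inj; rewrite !has_EpairN classes_of_swap !setU1x0K // !cardsU1 uY vY.
Qed.

Lemma phi_swap : phi A (x0 |: (u |: Y)) = phi A (x0 |: (v |: Y)).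
Proof.
rewrite /phi -/(has_Epair (x0 |: (u |: Y))) -/(has_Epair (x0 |: (v |: Y))).
rewrite -/(classes_of (x0 |: (u |: Y))) -/(classes_of (x0 |: (v |: Y))).
by rewrite has_Epair_swap classes_of_swap card_swap !setU11.
Qed.

Lemma has_Epair_pair : has_Epair (x0 |: (u |: (v |: Y))).
Proof.
by apply/existsP; exists u; apply/existsP; exists v; rewrite uv !in_setU1 !eqxx !orbT.
Qed.

Lemma I_uv_sub_Vsp : (I_uv u v <= Vsp A)%MS.
Proof. exact: (sumsmx_sup (u, v) (P := fun p => Epair p.1 p.2)) uv (submx_refl _). Qed.

Lemma swap_sub_Vsp : (qcls (x0 |: (u |: Y)) - qcls (x0 |: (v |: Y)) <= Vsp A)%MS.
Proof.
apply: submx_trans I_uv_sub_Vsp; apply: submx_trans (sumsmx_sup Y hY (submx_refl _)).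
by apply: submx_trans (addsmxSl _ _); rewrite genmxE.
Qed.

Lemma pair_sub_Vsp : (qcls (x0 |: (u |: (v |: Y))) <= Vsp A)%MS.
Proof.
apply: submx_trans I_uv_sub_Vsp; apply: submx_trans (sumsmx_sup Y hY (submx_refl _)).
by apply: submx_trans (addsmxSr _ _); rewrite genmxE.
Qed.

End Swap.

Lemma qcls_phibar s : x0 \in s -> qcls s *m phibar_mx A = phi A s.
Proof. by move=> s0; rewrite /qcls insubT /bvec -rowE rowK enum_rankK. Qed.

Lemma Vsp_sub_kermx : (Vsp A <= kermx (phibar_mx A))%MS.
Proof.
apply/sumsmx_subP => -[u v] /= uv; apply/sumsmx_subP => Y hY.
rewrite addsmx_sub !genmxE !sub_kermx mulmxBl !qcls_phibar ?setU11 //.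
by rewrite (phi_swap uv hY) subrr phi_has_Epair ?(has_Epair_pair Y uv) ?eqxx.
Qed.

Definition class_rep (c : {set 'I_n.+1}) := odflt x0 [pick y in c].

Definition rep_set S := x0 |: [set class_rep c | c in S].

Lemma class_rep_clsA y : y != x0 -> sim y (class_rep (cls y)) /\ class_rep (cls y) != x0.
Proof.
move=> y0; rewrite /class_rep; case: pickP => [z|] /=.
  by rewrite inE => /andP[-> ->].
by move/(_ y); rewrite inE y0 simA_refl.
Qed.

Lemma clsA_class_rep y : y != x0 -> cls (class_rep (cls y)) = cls y.
Proof. by move=> y0; case: (class_rep_clsA y0) => yr _; exact: esym (clsA_sim yr). Qed.

Lemma rep_setD1 s : rep_set (classes_of s) :\ x0 = [set class_rep c | c in classes_of s].
Proof.
rewrite /rep_set setU1K //; apply/imsetP => -[c /imsetP[y]].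
rewrite !inE => /andP[y0 _] -> x0_rep.
by case: (class_rep_clsA y0); rewrite -x0_rep eqxx.
Qed.

Lemma classes_of_rep_set s : classes_of (rep_set (classes_of s)) = classes_of s.
Proof.
rewrite /classes_of rep_setD1 -imset_comp -[RHS]imset_id; apply: eq_in_imset => c.
by case/imsetP => y; rewrite !inE => /andP[y0 _] -> /=; rewrite clsA_class_rep.
Qed.

Lemma card_rep_setD1 s : #|rep_set (classes_of s) :\ x0| = #|classes_of s|.
Proof.
rewrite rep_setD1 card_in_imset // => c d /imsetP[y]; rewrite !inE => /andP[y0 _] ->.
case/imsetP => z; rewrite !inE => /andP[z0 _] -> yz.
by rewrite -(clsA_class_rep y0) -(clsA_class_rep z0) yz.
Qed.

Lemma rep_set_has_EpairN s : ~~ has_Epair (rep_set (classes_of s)).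
Proof. by rewrite has_EpairN classes_of_rep_set card_rep_setD1. Qed.

Lemma exchange s t u : x0 \in s -> x0 \in t -> ~~ has_Epair s ->
  classes_of s = classes_of t -> u \in s :\: t ->
  exists s', [/\ (qcls s - qcls s' <= Vsp A)%MS, x0 \in s', ~~ has_Epair s',
    classes_of s' = classes_of t & #|s' :\: t|.+1 = #|s :\: t|].
Proof.
move=> s0 t0 noE st; rewrite inE => /andP[ut us].
have u0 : u != x0 by apply: contraNneq ut => ->.
have : cls u \in classes_of t by rewrite -st; apply/imsetP; exists u; rewrite ?inE ?u0.
case/imsetP => v; rewrite !inE => /andP[v0 vt] cls_uv.
have uv : Epair u v.
  rewrite /Defs.inE u0 v0 -eq_clsA // cls_uv eqxx /=.
  by apply: contraNneq ut => ->.
have vs : v \notin s.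
  apply: contra noE => vs; apply/existsP; exists u; apply/existsP; exists v.
  by rewrite uv us vs.
set Y := s :\ x0 :\ u.
have es : s = x0 |: (u |: Y) by rewrite /Y !setD1K // !inE u0.
have hY : Y \subset ~: [set x0; u; v].
  by rewrite subsetC3E /Y !inE !eqxx (negbTE vs) /= !andbF.
exists (x0 |: (v |: Y)); split.
- by rewrite {1}es; exact: swap_sub_Vsp.
- exact: setU11.
- by rewrite -(has_Epair_swap uv hY) -es.
- by rewrite -(classes_of_swap uv hY) -es.
have -> : (x0 |: (v |: Y)) :\: t = (s :\: t) :\ u.
  apply/setP => x; rewrite !inE.
  case: (eqVneq x x0) => [->|_]; first by rewrite t0 !andbF.
  case: (eqVneq x v) => [->|_]; first by rewrite vt !andbF.
  by case: (eqVneq x u) => [->|_] /=; rewrite ?andbF ?andbT.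
by rewrite [RHS](cardsD1 u) in_setD ut us.
Qed.

Lemma no_Epair_sub_eq s t : x0 \in s -> x0 \in t -> ~~ has_Epair s -> ~~ has_Epair t ->
  classes_of s = classes_of t -> s \subset t -> s = t.
Proof.
move=> s0 t0 + + st sub; rewrite !has_EpairN st => /eqP s_card /eqP t_card.
rewrite -(setD1K s0) -(setD1K t0); congr (_ |: _); apply/eqP.
by rewrite eqEcard setSD //= -s_card -t_card.
Qed.

Lemma same_classes_sub_Vsp s t : x0 \in s -> x0 \in t -> ~~ has_Epair s -> ~~ has_Epair t ->
  classes_of s = classes_of t -> (qcls s - qcls t <= Vsp A)%MS.
Proof.
move=> + t0 + noEt; move st_card: #|s :\: t| => k.
elim: k s st_card => [|k IH] s st_card s0 noEs st.
  have sub : s \subset t by rewrite -setD_eq0 -cards_eq0 st_card.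
  by rewrite (no_Epair_sub_eq s0 t0 noEs noEt st sub) subrr sub0mx.
have /set0Pn[u ust] : s :\: t != set0 by rewrite -card_gt0 st_card.
have [s' [ss' s'0 noEs' s't s't_card]] := exchange s0 t0 noEs st ust.
rewrite -(subrK (qcls s') (qcls s)) -addrA; apply: addmx_sub ss' _.
by apply: IH => //; apply: succn_inj; rewrite s't_card st_card.
Qed.

Definition section_mx : 'M[rat]_(#|{: T}|, #|{: Q}|) :=
  \matrix_(j < #|{: T}|)
    ((-1) ^+ #|val (enum_val j)| *: qcls (rep_set (val (enum_val j)))).

Lemma tbvec_section S :
  S \subset Atil A -> tbvec A S *m section_mx = (-1) ^+ #|S| *: qcls (rep_set S).
Proof. by move=> SA; rewrite /tbvec insubT /bvec -rowE rowK enum_rankK. Qed.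

Lemma phiE s : x0 \in s -> ~~ has_Epair s ->
  phi A s = (-1) ^+ #|classes_of s| *: tbvec A (classes_of s).
Proof.
move=> s0 noE; rewrite /phi -/(has_Epair s) -/(classes_of s) s0 noE.
by move: noE; rewrite has_EpairN (cardsD1 x0 s) s0 => /eqP ->; rewrite add1n subn1.
Qed.

Lemma qcls_sub_phi_section s : x0 \in s -> (qcls s - phi A s *m section_mx <= Vsp A)%MS.
Proof.
move=> s0; have [sE | noE] := boolP (has_Epair s).
  rewrite phi_has_Epair // mul0mx subr0.
  case/existsP: sE => y /existsP[z /and3P[yz ys zs]].
  have [y0 z0 _ y'z] := and4P yz.
  set Y := s :\ x0 :\ y :\ z.
  have hY : Y \subset ~: [set x0; y; z] by rewrite subsetC3E !inE !eqxx /= !andbF.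
  have -> : s = x0 |: (y |: (z |: Y)).
    by rewrite /Y !setD1K // !inE ?y0 ?z0 ?ys ?zs // eq_sym y'z.
  exact: pair_sub_Vsp.
rewrite phiE // -scalemxAl tbvec_section ?classes_of_sub // scalerA.
rewrite -exprMn mulrNN mulr1 expr1n scale1r.
apply: same_classes_sub_Vsp => //; first exact: setU11.
- exact: rep_set_has_EpairN.
- by rewrite classes_of_rep_set.
Qed.

Lemma qcls_enum_val (i : 'I_#|{: Q}|) : qcls (val (enum_val i)) = delta_mx 0 i.
Proof. by rewrite /qcls valK /bvec enum_valK. Qed.

Lemma kermx_sub_Vsp : (kermx (phibar_mx A) <= Vsp A)%MS.
Proof.
have id_sub : (1%:M - phibar_mx A *m section_mx <= Vsp A)%MS.
  apply/row_subP => i; have s0 := valP (enum_val i).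
  rewrite rowE mulmxBr mulmx1 mulmxA -qcls_enum_val qcls_phibar //.
  exact: qcls_sub_phi_section.
apply/row_subP => i; set w := row i _.
have w_ker : w *m phibar_mx A = 0 by rewrite /w -row_mul mulmx_ker row0.
have -> : w = w *m (1%:M - phibar_mx A *m section_mx).
  by rewrite mulmxBr mulmx1 mulmxA w_ker mul0mx subr0.
exact: submx_trans (submxMl _ _) id_sub.
Qed.

End Arrangement.

Theorem lemma3p2 (R : realType) (l n : nat) (A : 'I_n.+1 -> 'M[complex R]_l) :
  is_subspace_arrangement A ->
  classes_consecutive A ->
  (Vsp A == kermx (phibar_mx A))%MS.
Proof.
by move=> _ _; apply/andP; split; [exact: Vsp_sub_kermx | exact: kermx_sub_Vsp].
Qed.
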